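(* Let $f_1,\dots,f_\Lambda$ be $\Lambda\ge2$ candidate models and let $\mathcal{A}$ be any deterministic pairwise comparison rule assigning to each pair $\{f,f'\}$ of distinct candidates one of them, $\mathcal{A}(f,f')\in\{f,f'\}$. Run the tournament procedure described in the context with $\mathcal{A}$. Then there are universal constants $0<c\le C$ such that the expected number of calls to $\mathcal{A}$ (expectation over the random pivot choices) lies between $c\Lambda$ and $C\Lambda$; i.e. it is $\Theta(\Lambda)$.
   Context: Tournament procedure (ATOMS): initialize $S=\{f_1,\dots,f_\Lambda\}$. While $|S|>1$: choose a pivot $f\in S$ uniformly at random (independently of the past); set $S'=\{f'\in S\setminus\{f\}:\mathcal{A}(f,f')=f'\}$ (this requires one call to $\mathcal{A}$ for each $f'\in S\setminus\{f\}$); if $S'=\emptyset$, output $f$ and stop; otherwise set $S\leftarrow S'$. If the loop ends with $|S|=1$, output the unique element of $S$. *)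

From mathcomp Require Import all_boot all_order all_algebra.
Set Implicit Arguments. Unset Strict Implicit. Unset Printing Implicit Defensive.
Import Order.TTheory GRing.Theory Num.Theory.
Local Open Scope ring_scope.

(* Candidates f_1..f_Lambda are the elements of 'I_L.
   A : 'I_L -> 'I_L -> 'I_L is the comparison rule; A f f' is the winner. *)

Definition comparison_rule (L : nat) (A : 'I_L -> 'I_L -> 'I_L) : Prop :=
  forall f f' : 'I_L, f != f' ->
    (A f f' == f) || (A f f' == f') /\ A f f' = A f' f.

Definition beaters (L : nat) (A : 'I_L -> 'I_L -> 'I_L) (f : 'I_L)
  (S : {set 'I_L}) : {set 'I_L} :=
  [set f' in S | (f' != f) && (A f f' == f')].

(* Expected number of further calls to A when the tournament is run from the
   current set S, with a fuel argument n (n = #|S| suffices since each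
   S' is a strict subset of S).  If |S| <= 1 the loop stops (0 calls);
   otherwise a uniform pivot f in S costs |S|-1 calls, and the procedure
   continues from S' (if S' is empty it stops, which is consistent since
   the cost from the empty set is 0). *)
Fixpoint exp_calls_fuel (R : numFieldType) (L : nat)
  (A : 'I_L -> 'I_L -> 'I_L) (n : nat) (S : {set 'I_L}) : R :=
  match n with
  | O => 0
  | n'.+1 =>
      if (#|S| <= 1)%N then 0
      else (#|S|.-1)%:R
           + (#|S|%:R)^-1 * \sum_(f in S) exp_calls_fuel R A n' (beaters A f S)
  end.

Definition expected_calls (R : numFieldType) (L : nat)
  (A : 'I_L -> 'I_L -> 'I_L) : R :=
  exp_calls_fuel R A L [set: 'I_L].

From mathcomp Require Import all_boot all_order all_algebra.
From mathcomp Require Import reals.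
From mathcomp Require Import lra.
Import Order.TTheory GRing.Theory Num.Theory.
Local Open Scope ring_scope.
Set Implicit Arguments. Unset Strict Implicit.

(* Proof idea: the first round alone compares the pivot with the other
   Lambda - 1 candidates, which gives the lower bound.  For the upper bound,
   let E(S) be the expected cost from S.  Since A is symmetric, each pair
   {f, g} of S contributes to at most one of the sets beaters f S and
   beaters g S, so the average size of the next set is at most (|S| - 1)/2;
   by induction E(S) <= |S| - 1 + (2/|S|) * |S|(|S| - 1)/2 <= 2|S|. *)

Section PairCounting.

Variables (L : nat) (A : 'I_L -> 'I_L -> 'I_L).
Hypothesis A_sym : forall f g, f != g -> A f g = A g f.

Lemma card_beaters f (S : {set 'I_L}) :
  #|beaters A f S| = (\sum_(g in S) (g \in beaters A f S))%N.
Proof.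
rewrite -sum1_card big_mkcond [RHS]big_mkcond /=.
apply: eq_bigr => g _; rewrite inE.
by case: (g \in S); case: (g != f); case: (A f g == g).
Qed.

Lemma beaters_pair_le f g (S : {set 'I_L}) :
  ((f \in beaters A g S) + (g \in beaters A f S) <= (g != f))%N.
Proof.
rewrite !inE; have [-> | neq_gf] := eqVneq g f; first by rewrite /= !andbF.
rewrite /= (A_sym neq_gf).
by have [->|] := eqVneq (A f g) g; rewrite ?(negbTE neq_gf) ?andbF ?addn0 ?add0n ?leq_b1.
Qed.

Lemma sum_card_beaters (S : {set 'I_L}) :
  (2 * \sum_(f in S) #|beaters A f S| <= #|S| * #|S|.-1)%N.
Proof.
under eq_bigr do rewrite card_beaters.
rewrite mul2n -addnn [X in (X + _ <= _)%N]exchange_big -big_split /=.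
rewrite -sum_nat_const; apply: leq_sum => f Sf; rewrite -big_split /=.
have -> : #|S|.-1 = (\sum_(g in S) (g != f))%N.
  rewrite (cardsD1 f S) Sf add1n /= -sum1_card big_mkcond [RHS]big_mkcond /=.
  by apply: eq_bigr => g _; rewrite !inE; case: (g \in S); case: (g != f).
by apply: leq_sum => g _; apply: beaters_pair_le.
Qed.

End PairCounting.

Section ExpectedCalls.

Variables (R : numFieldType) (L : nat) (A : 'I_L -> 'I_L -> 'I_L).

Lemma exp_calls_fuel_ge0 n (S : {set 'I_L}) : 0 <= exp_calls_fuel R A n S.
Proof.
elim: n S => [|n IH] S //=; case: ifP => // _.
by rewrite addr_ge0 ?mulr_ge0 ?invr_ge0 ?sumr_ge0.
Qed.

Lemma exp_calls_fuel_ge_first_round n (S : {set 'I_L}) :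
  (1 < #|S|)%N -> (#|S|.-1)%:R <= exp_calls_fuel R A n.+1 S.
Proof.
move=> S_gt1 /=; rewrite leqNgt S_gt1 lerDl.
by rewrite mulr_ge0 ?invr_ge0 ?sumr_ge0 // => f _; apply: exp_calls_fuel_ge0.
Qed.

Hypothesis A_sym : forall f g, f != g -> A f g = A g f.

Lemma exp_calls_fuel_le n (S : {set 'I_L}) :
  exp_calls_fuel R A n S <= 2 * #|S|%:R.
Proof.
elim: n S => [|n IH] S /=; first by rewrite mulr_ge0.
case: leqP => [_|S_gt1]; first by rewrite mulr_ge0.
set k := #|S|; have k_gt0 : 0 < k%:R :> R by rewrite ltr0n (ltn_trans _ S_gt1).
have sum_le :
    \sum_(f in S) exp_calls_fuel R A n (beaters A f S) <= (k * k.-1)%:R.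
  apply: le_trans (_ : (2 * \sum_(f in S) #|beaters A f S|)%:R <= _).
    by rewrite natrM natr_sum mulr_sumr; apply: ler_sum => f _; apply: IH.
  by rewrite ler_nat sum_card_beaters.
apply: le_trans (_ : k.-1%:R + k%:R^-1 * (k * k.-1)%:R <= _).
  by rewrite lerD2l; apply: ler_wpM2l sum_le; rewrite invr_ge0 ler0n.
rewrite natrM mulrA mulVf ?gt_eqF // mul1r mulr_natl mulr2n.
by rewrite lerD ?ler_nat ?leq_pred.
Qed.

End ExpectedCalls.

Theorem mainTheorem2 (R : realType) :
  exists c C : R, 0 < c /\ c <= C /\
    forall (L : nat) (A : 'I_L -> 'I_L -> 'I_L),
      (2 <= L)%N -> comparison_rule A ->
      c * L%:R <= expected_calls R A /\ expected_calls R A <= C * L%:R.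
Proof.
exists 2^-1, 2; do 2![split; first lra] => L A L_ge2 A_rule.
have A_sym f g : f != g -> A f g = A g f by move=> /A_rule [].
rewrite /expected_calls; split; last first.
  by have := exp_calls_fuel_le R A_sym L [set: 'I_L]; rewrite cardsT card_ord.
case: L A L_ge2 {A_rule A_sym} => // L A L_gt1.
have := @exp_calls_fuel_ge_first_round R _ A L [set: _].
rewrite cardsT card_ord /= => /(_ L_gt1); apply: le_trans.
have : 1 <= L%:R :> R by rewrite ler1n.
rewrite -[L.+1%:R]natr1; lra.
Qed.
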